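(* Let $\mathcal{X}$ be a connected $n$-premaniplex and $(\mathcal{Y},\eta)$ an $(n,m)$-voltage operator that preserves connectivity. Let $\Gamma$ be the set of automorphisms of $\mathcal{Y}$ that lift to $\mathcal{X}\rtimes_\eta\mathcal{Y}$, and $\tilde\Gamma$ the set of automorphisms of $\mathcal{X}\rtimes_\eta\mathcal{Y}$ that are lifts of elements of $\Gamma$. Then $\Gamma\le\operatorname{Aut}(\mathcal{Y})$ and $\tilde\Gamma\le\operatorname{Aut}(\mathcal{X}\rtimes_\eta\mathcal{Y})$ are subgroups, and there are an injective homomorphism $\iota:\operatorname{Aut}(\mathcal{X})\to\tilde\Gamma$ (given by $(x,y)\iota(\alpha)=(x\alpha,y)$) and a surjective homomorphism $\pi:\tilde\Gamma\to\Gamma$ (sending a lift of $\tau$ to $\tau$) with $\iota(\operatorname{Aut}(\mathcal{X}))=\ker\pi$. Consequently $\iota(\operatorname{Aut}(\mathcal{X}))\trianglelefteq\tilde\Gamma$, $\tilde\Gamma/\iota(\operatorname{Aut}(\mathcal{X}))\cong\Gamma$, and if $\mathcal{X}$ and $\mathcal{Y}$ are finite then $|\tilde\Gamma|=|\operatorname{Aut}(\mathcal{X})|\,|\Gamma|$.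
   Context: An $n$-premaniplex is an edge-coloured graph (semi-edges and parallel edges allowed) with colours $\{0,\dots,n-1\}$ such that every vertex (flag) is the start of exactly one dart of each colour, and for $|i-j|\ge2$ alternating $i,j$-paths of length 4 are closed; $x^i$ is the $i$-adjacent flag of $x$. $\mathcal{C}^n=\langle r_0,\dots,r_{n-1}\mid r_i^2,\ (r_ir_j)^2\ (|i-j|\ge2)\rangle$ acts on the left on flags by $r_ix=x^i$; automorphisms act on the right. For a flag $y$ of an $m$-premaniplex $\mathcal{Y}$ and $\omega\in\mathcal{C}^m$, $W_\omega(y)$ is the homotopy class of paths from $y$ whose colour sequence $i_1,\dots,i_k$ satisfies $r_{i_k}\cdots r_{i_1}=\omega$; these form the fundamental groupoid $\Pi(\mathcal{Y})$. A voltage assignment $\eta:\Pi(\mathcal{Y})\to\mathcal{C}^n$ satisfies $\eta(W_1W_2)=\eta(W_2)\eta(W_1)$; $(\mathcal{Y},\eta)$ is an $(n,m)$-voltage operator. $\mathcal{X}\rtimes_\eta\mathcal{Y}$ has flags $\mathcal{X}\times\mathcal{Y}$ and $(x,y)^i=(\eta(W_{r_i}(y))x,r_iy)$, $i\in\{0,\dots,m-1\}$. The operator preserves connectivity if $\mathcal{X}\rtimes_\eta\mathcal{Y}$ is connected whenever $\mathcal{X}$ is. $\tilde\tau\in\operatorname{Aut}(\mathcal{X}\rtimes_\eta\mathcal{Y})$ is a lift of $\tau\in\operatorname{Aut}(\mathcal{Y})$ if the $\mathcal{Y}$-coordinate of $(x,y)\tilde\tau$ is $y\tau$ for all $(x,y)$;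 $\tau$ lifts if it has a lift. Standing convention: $\mathcal{Y}$ has a spanning tree all of whose darts have trivial voltage. *)

From HB Require Import structures.
From Stdlib Require Import Relation_Operators.
From mathcomp Require Import all_boot.
From mathcomp Require Import boolp classical_sets functions cardinality.



Unset Printing Implicit Defensive.

Local Open Scope classical_set_scope.

(* The Coxeter group C^n = < r_0..r_{n-1} | r_i^2, (r_i r_j)^2, |i-j|>=2 > *)
(* realised as words over 'I_n modulo the congruence generated by the    *)
(* relators.  A word [:: i_1; ...; i_k] stands for r_{i_k} ... r_{i_1}   *)
(* (the element associated with a path of colour sequence i_1..i_k).     *)
(* Hence the product  elt(u) * elt(v)  is  elt(v ++ u).                  *)

Definition far {n : nat} (i j : 'I_n) : bool := (i + 2 <= j)%N || (j + 2 <= i)%N.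

Inductive cox_step {n : nat} : seq 'I_n -> seq 'I_n -> Prop :=
| cox_del_sq (u v : seq 'I_n) (i : 'I_n) :
    cox_step (u ++ [:: i; i] ++ v) (u ++ v)
| cox_del_comm (u v : seq 'I_n) (i j : 'I_n) : far i j ->
    cox_step (u ++ [:: i; j; i; j] ++ v) (u ++ v).

Definition coxeq {n : nat} : seq 'I_n -> seq 'I_n -> Prop :=
  clos_refl_sym_trans (seq 'I_n) (@cox_step n).

(* Premaniplexes.  Since every flag is the start of exactly one dart of *)
(* each colour, the coloured graph is the same thing as the family of   *)
(* involutions x |-> x^i (a fixed point being a semi-edge).             *)

Record premaniplex (n : nat) := Premaniplex {
  flag :> Type;
  adj : 'I_n -> flag -> flag;
  adjK : forall i, involutive (adj i);
  adj_far : forall (i j : 'I_n), far i j ->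
    forall x, adj j (adj i (adj j (adj i x))) = x
}.
Arguments flag {n} _.
Arguments adj {n} _ _ _.
Arguments Premaniplex {n} _ _ _ _.

(* endpoint of the path from x with colour sequence w, i.e. the left   *)
(* action  omega x  of the element omega represented by w              *)
Definition actw {F : Type} {n : nat} (ad : 'I_n -> F -> F) (w : seq 'I_n) (x : F) : F :=
  foldl (fun z i => ad i z) x w.

Definition connected_adj {F : Type} {n : nat} (ad : 'I_n -> F -> F) : Prop :=
  inhabited F /\ forall x y : F, exists w : seq 'I_n, actw ad w x = y.

Definition connected {n : nat} (X : premaniplex n) : Prop := connected_adj (adj X).

Definition is_aut {F : Type} {n : nat} (ad : 'I_n -> F -> F) (f : F -> F) : Prop :=
  bijective f /\ forall (i : 'I_n) (x : F), f (ad i x) = ad i (f x).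

Definition Aut_adj {F : Type} {n : nat} (ad : 'I_n -> F -> F) : set (F -> F) :=
  [set f | is_aut ad f].

(* Automorphisms act on the right: x(ab) = (xa)b. *)
Definition rmul {F : Type} (f g : F -> F) : F -> F := g \o f.

Definition is_subgroup {F : Type} (G H : set (F -> F)) : Prop :=
  [/\ H `<=` G, H id,
      (forall f g, H f -> H g -> H (rmul f g)) &
      (forall f, H f -> exists g, [/\ H g, rmul f g = id & rmul g f = id])].

(* Voltage operators.  The fundamental groupoid Pi(Y) consists of the  *)
(* classes W_omega(y), y a flag of Y and omega in C^m; W_omega(y) is    *)
(* represented by (y, w) with w any word representing omega.  The      *)
(* concatenation W_omega(y) W_omega'(omega y) is W_(omega' omega)(y),   *)
(* represented by (y, w ++ w').  A voltage assignment eta : Pi(Y) -> C^n*)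
(* must be well defined on classes and satisfy                          *)
(*   eta(W1 W2) = eta(W2) eta(W1).                                       *)

Record voltage_operator (n m : nat) := VoltageOperator {
  vY : premaniplex m;
  eta : vY -> seq 'I_m -> seq 'I_n;
  eta_wd : forall (y : vY) (w w' : seq 'I_m),
    coxeq w w' -> coxeq (eta y w) (eta y w');
  eta_anti : forall (y : vY) (w w' : seq 'I_m),
    coxeq (eta y (w ++ w')) (eta y w ++ eta (actw (adj vY) w y) w')
}.
Arguments vY {n m} _.
Arguments eta {n m} _ _ _.

Fixpoint walk_in {m : nat} {Y : premaniplex m} (T : Y -> 'I_m -> Prop)
    (y : Y) (w : seq 'I_m) : Prop :=
  if w is i :: w' then T y i /\ walk_in T (adj Y i y) w' else True.

(* Standing convention: Y has a spanning tree all of whose darts have  *)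
(* trivial voltage.  A spanning tree is a set T of darts, closed under *)
(* reversal, connecting all flags, and without non-backtracking closed *)
(* walks other than the trivial one (in a premaniplex a walk backtracks *)
(* exactly when two consecutive colours coincide).                     *)
Definition spanning_tree {m : nat} (Y : premaniplex m) (T : Y -> 'I_m -> Prop) : Prop :=
  [/\ (forall y i, T y i -> T (adj Y i y) i),
      (forall y y' : Y, exists w, walk_in T y w /\ actw (adj Y) w y = y') &
      (forall (y : Y) w, walk_in T y w -> sorted (fun a b : 'I_m => a != b) w ->
         actw (adj Y) w y = y -> w = [::])].

Definition tree_convention {n m : nat} (V : voltage_operator n m) : Prop :=
  exists T, spanning_tree (vY V) T /\ forall y i, T y i -> coxeq (eta V y [:: i]) [::].

Definition mix_adj {n m : nat} (X : premaniplex n) (V : voltage_operator n m)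
    (i : 'I_m) (p : X * vY V) : X * vY V :=
  (actw (adj X) (eta V p.2 [:: i]) p.1, adj (vY V) i p.2).

Definition preserves_connectivity {n m : nat} (V : voltage_operator n m) : Prop :=
  forall X : premaniplex n, connected X -> connected_adj (mix_adj X V).

Definition lift_of {n m : nat} {X : premaniplex n} {V : voltage_operator n m}
    (phi : X * vY V -> X * vY V) (tau : vY V -> vY V) : Prop :=
  forall p, (phi p).2 = tau p.2.

Definition Gamma {n m : nat} (X : premaniplex n) (V : voltage_operator n m) :
    set (vY V -> vY V) :=
  [set tau | is_aut (adj (vY V)) tau /\
     exists phi, is_aut (mix_adj X V) phi /\ lift_of phi tau].

Definition Gammat {n m : nat} (X : premaniplex n) (V : voltage_operator n m) :
    set (X * vY V -> X * vY V) :=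
  [set phi | is_aut (mix_adj X V) phi /\
     exists tau, Gamma X V tau /\ lift_of phi tau].

Definition iota_aut {n m : nat} (X : premaniplex n) (V : voltage_operator n m)
    (alpha : X -> X) : X * vY V -> X * vY V :=
  fun p => (alpha p.1, p.2).

Definition lcoset {F : Type} (K : set (F -> F)) (phi : F -> F) : set (F -> F) :=
  [set rmul phi k | k in K].

(* The projection pi : phi |-> (y |-> (phi (x0, y)).2) sends every lift of tau to tau, so it
   is a homomorphism from tilde Gamma onto Gamma and everything follows from the first
   isomorphism theorem once its kernel is identified with iota(Aut X).  A lift phi of the
   identity preserves every fibre X * {y}.  Walking along the spanning tree, whose darts have
   trivial voltage, shows that phi acts by one and the same map a on every fibre.  That a is an
   automorphism of X comes from connectivity preservation applied to the component of (x, a x)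
   in X * X: one word then carries (x, y0) to (x^i, y0) and (a x, y0) to ((a x)^i, y0) in the
   mix, and phi maps the first walk onto the second. *)

From Pilot Require Import Defs.
From mathcomp Require Import all_boot.
From mathcomp Require Import boolp classical_sets functions cardinality.

Local Open Scope classical_set_scope.
Local Open Scope card_scope.

Section Walks.
Context {F : Type} {n : nat}.
Implicit Types (ad : 'I_n -> F -> F) (w : seq 'I_n).

Lemma actw_cat ad u v x : actw ad (u ++ v) x = actw ad v (actw ad u x).
Proof. by rewrite /actw foldl_cat. Qed.

Lemma actw_rcons ad w i x : actw ad (rcons w i) x = ad i (actw ad w x).
Proof. by rewrite -cats1 actw_cat. Qed.

Lemma actw_revK ad : (forall i, involutive (ad i)) ->
  forall w x, actw ad (rev w) (actw ad w x) = x.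
Proof.
by move=> adK; elim=> // i w IHw x; rewrite rev_cons actw_rcons /= IHw adK.
Qed.

Lemma actw_morph {F' : Type} ad (ad' : 'I_n -> F' -> F') (g : F -> F') :
  (forall i x, g (ad i x) = ad' i (g x)) ->
  forall w x, g (actw ad w x) = actw ad' w (g x).
Proof. by move=> gad; elim=> // i w IHw x /=; rewrite IHw gad. Qed.

End Walks.

Lemma coxeq_actw {n : nat} (X : premaniplex n) {w w' : seq 'I_n} :
  coxeq w w' -> actw (adj X) w =1 actw (adj X) w'.
Proof.
elim=> [_ _ [u v i | u v i j ij] | u | u v _ IH | u v t _ IH1 _ IH2] x //.
- by rewrite !actw_cat /= adjK.
- by rewrite !actw_cat /= adj_far.
- by rewrite IH1 IH2.
Qed.

Section Automorphisms.
Context {F : Type} {n : nat} (ad : 'I_n -> F -> F).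

Lemma is_aut_id : is_aut ad id.
Proof. by split=> //; exists id. Qed.

Lemma is_aut_rmul f g : is_aut ad f -> is_aut ad g -> is_aut ad (rmul f g).
Proof.
move=> [fbij fad] [gbij gad]; split; first exact: bij_comp.
by move=> i x; rewrite /rmul /= fad gad.
Qed.

Lemma is_aut_inv f :
  is_aut ad f -> exists g, [/\ is_aut ad g, cancel f g & cancel g f].
Proof.
move=> [[g fK gK] fad]; exists g; split=> //; split; first by exists f.
by move=> i x; rewrite -{1}(gK x) -fad fK.
Qed.

End Automorphisms.

Lemma rmul_idP {F : Type} (f g : F -> F) : rmul f g = id <-> cancel f g.
Proof. by split=> [fg x | fK]; [rewrite -[RHS]/(id x) -fg | apply: funext]. Qed.

Section Constructions.
Context {n : nat}.

Definition pair_adj (X X' : premaniplex n) (i : 'I_n) (p : X * X') : X * X' :=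
  (adj X i p.1, adj X' i p.2).

Lemma pair_adjK X X' i : involutive (pair_adj X X' i).
Proof. by move=> [x x']; rewrite /pair_adj /= !adjK. Qed.

Lemma pair_adj_far X X' (i j : 'I_n) : far i j -> forall p,
  pair_adj X X' j (pair_adj X X' i (pair_adj X X' j (pair_adj X X' i p))) = p.
Proof. by move=> ij [x x']; rewrite /pair_adj /= !adj_far. Qed.

Definition prod_premaniplex (X X' : premaniplex n) : premaniplex n :=
  Premaniplex (X * X') (pair_adj X X') (pair_adjK X X') (pair_adj_far X X').

Variable Z : premaniplex n.

Definition component_flag (z : Z) := {z' : Z | exists w, actw (adj Z) w z = z'}.

Lemma component_val_inj z : injective (fun c : component_flag z => sval c).
Proof. by move=> [c ?] [d ?] /= cd; apply: eq_exist. Qed.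

Lemma component_adj_subproof {z} i (c : component_flag z) :
  exists w, actw (adj Z) w z = adj Z i (sval c).
Proof. by case: c => _ /= [w <-]; exists (rcons w i); rewrite actw_rcons. Qed.

Definition component_adj {z} i (c : component_flag z) : component_flag z :=
  exist _ (adj Z i (sval c)) (component_adj_subproof i c).

Lemma component_adjK z i : involutive (@component_adj z i).
Proof. by move=> c; apply: component_val_inj; apply: adjK. Qed.

Lemma component_adj_far z (i j : 'I_n) : far i j -> forall c,
  component_adj j (component_adj i (component_adj j (@component_adj z i c))) = c.
Proof. by move=> ij c; apply: component_val_inj; apply: adj_far. Qed.

Definition component (z : Z) : premaniplex n :=
  Premaniplex (component_flag z) (@component_adj z)
    (@component_adjK z) (@component_adj_far z).

Definition component_root (z : Z) : component z := exist _ z (ex_intro _ [::] erefl).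

Lemma component_connected z : connected (component z).
Proof.
split; first exact: inhabits (component_root z).
move=> [c [u cu]] [d [v dv]]; exists (rev u ++ v); apply: component_val_inj.
rewrite (actw_morph _ (adj Z) (fun c : component z => sval c)) //=.
by rewrite actw_cat -cu -dv actw_revK //; apply: adjK.
Qed.

End Constructions.

Section Lifts.
Context {n m : nat} {X : premaniplex n} {V : voltage_operator n m}.
Implicit Types (phi psi : X * vY V -> X * vY V) (tau sigma : vY V -> vY V).

Lemma lift_of_rmul phi psi tau sigma :
  lift_of phi tau -> lift_of psi sigma -> lift_of (rmul phi psi) (rmul tau sigma).
Proof. by move=> phitau psisigma p; rewrite /rmul /= psisigma phitau. Qed.

Lemma lift_of_inv phi phi' tau tau' :
  lift_of phi tau -> cancel phi' phi -> cancel tau tau' -> lift_of phi' tau'.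
Proof. by move=> phitau phi'K tauK p; rewrite -{2}(phi'K p) phitau tauK. Qed.

End Lifts.

Section Mix.
Context {n m : nat} {V : voltage_operator n m}.
Local Notation Y := (vY V).

Lemma mix_adj_map {X X' : premaniplex n} (g : X -> X') :
  (forall i x, g (adj X i x) = adj X' i (g x)) ->
  forall i (p : X * Y),
  (g (mix_adj X V i p).1, (mix_adj X V i p).2) = mix_adj X' V i (g p.1, p.2).
Proof. by move=> gad i [x y]; rewrite /mix_adj /=; congr (_, _); apply: actw_morph. Qed.

Lemma iota_is_aut (X : premaniplex n) a :
  is_aut (adj X) a -> is_aut (mix_adj X V) (iota_aut X V a).
Proof.
move=> [[b aK bK] aad]; split; last exact: mix_adj_map.
by exists (iota_aut X V b) => -[x y]; rewrite /iota_aut /= ?aK ?bK.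
Qed.

Lemma mix_common_walk (Vpres : preserves_connectivity V) (X : premaniplex n)
    (x x' : X) (y : Y) (j : 'I_n) :
  exists w, actw (mix_adj X V) w (x, y) = (adj X j x, y) /\
            actw (mix_adj X V) w (x', y) = (adj X j x', y).
Proof.
pose Z := component (prod_premaniplex X X) (x, x').
pose z := component_root (prod_premaniplex X X) (x, x').
have [_ walk] := Vpres Z (component_connected (prod_premaniplex X X) (x, x')).
have [w wz] := walk (z, y) (adj Z j z, y).
have proj (g : Z -> X) : (forall i c, g (adj Z i c) = adj X i (g c)) ->
    actw (mix_adj X V) w (g z, y) = (g (adj Z j z), y).
  move=> gad; have gpad := mix_adj_map g gad.
  by rewrite -[(g z, y)]/((g (z, y).1, (z, y).2)) -(actw_morph _ _ _ gpad) wz.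
by exists w; split; [apply: (proj (fun c => (sval c).1)) |
                     apply: (proj (fun c => (sval c).2))].
Qed.

Lemma actw_mix_tree {T : Y -> 'I_m -> Prop} :
  (forall y i, T y i -> coxeq (Defs.eta V y [:: i]) [::]) ->
  forall (X : premaniplex n) w x y, walk_in T y w ->
  actw (mix_adj X V) w (x, y) = (x, actw (adj Y) w y).
Proof.
move=> Tvolt X; elim=> // i w IHw x y /= [Tyi wT].
by rewrite /mix_adj /= (coxeq_actw _ (Tvolt _ _ Tyi)) IHw.
Qed.

Section Kernel.
Hypotheses (Vconv : tree_convention V) (Vpres : preserves_connectivity V).
Context {X : premaniplex n}.
Variable y0 : Y.

Lemma commuting_lift_id_iota {phi} :
  (forall i p, phi (mix_adj X V i p) = mix_adj X V i (phi p)) -> lift_of phi id ->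
  exists a, phi = iota_aut X V a /\ forall i x, a (adj X i x) = adj X i (a x).
Proof.
move=> phiad phi_id; pose a x := (phi (x, y0)).1.
have phi_y0 x : phi (x, y0) = (a x, y0) by rewrite [LHS]surjective_pairing phi_id.
exists a; split.
  apply: funext => -[x y]; have [T [[_ Tconn _] Tvolt]] := Vconv.
  have [w [wT <-]] := Tconn y0 y.
  rewrite /iota_aut /= -(actw_mix_tree Tvolt X w x _ wT) (actw_morph _ _ phi phiad).
  by rewrite phi_y0 (actw_mix_tree Tvolt).
move=> i x; have [w [wx wax]] := mix_common_walk Vpres X x (a x) y0 i.
by have := actw_morph _ _ phi phiad w (x, y0); rewrite wx !phi_y0 wax => -[].
Qed.

Lemma lift_id_iota {phi} : is_aut (mix_adj X V) phi -> lift_of phi id ->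
  exists2 a, is_aut (adj X) a & phi = iota_aut X V a.
Proof.
move=> phi_aut phi_id; have [psi [[_ psiad] phiK psiK]] := is_aut_inv _ _ phi_aut.
have psi_id : lift_of psi id by apply: lift_of_inv phi_id psiK _.
have [a [phiE aad]] := commuting_lift_id_iota phi_aut.2 phi_id.
have [b [psiE _]] := commuting_lift_id_iota psiad psi_id.
exists a => //; split => //; exists b => x.
- by have := phiK (x, y0); rewrite phiE psiE => -[].
- by have := psiK (x, y0); rewrite phiE psiE => -[].
Qed.

End Kernel.
End Mix.

Lemma is_subgroup_intro {F : Type} (S H : set (F -> F)) :
  H `<=` S -> H id -> (forall f g, H f -> H g -> H (rmul f g)) ->
  (forall f, H f -> exists g, [/\ H g, cancel f g & cancel g f]) ->
  is_subgroup S H.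
Proof.
move=> HS H_id H_rmul H_inv; split=> // f /H_inv[g [Hg fK gK]].
by exists g; split=> //; apply/rmul_idP.
Qed.

Lemma card_setX_II {T U : Type} {A : set T} {B : set U} {a b : nat} :
  A #= `I_a -> B #= `I_b -> A `*` B #= `I_(a * b).
Proof.
move=> /card_set_bijP[f [fA finj fsurj]] /card_set_bijP[g [gB ginj gsurj]].
apply/card_set_bijP; exists (fun q => f q.1 + a * g q.2).
have encK u v : u < a -> (u + a * v) %% a = u /\ (u + a * v) %/ a = v.
  move=> ua; have a_gt0 : 0 < a by apply: leq_ltn_trans ua.
  by rewrite addnC mulnC modnMDl divnMDl // modn_small // divn_small // addn0.
split.
- move=> [x y] [/fA /= xa /gB /= yb].
  apply: leq_trans (_ : a * (g y).+1 <= a * b); last exact: leq_mul.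
  by rewrite mulnS ltn_add2r.
- move=> [x y] [x' y']; rewrite !in_setE => -[Ax By] [Ax' By'] /= e.
  have [ex ey] := encK (f x) (g y) (fA _ Ax).
  have [ex' ey'] := encK (f x') (g y') (fA _ Ax').
  congr (_, _); [apply: finj | apply: ginj]; rewrite ?in_setE //.
  + by rewrite -ex -ex' e.
  + by rewrite -ey -ey' e.
- move=> k /= kab.
  have a_gt0 : 0 < a by rewrite lt0n; apply: contraTneq kab => ->; rewrite mul0n.
  have [x Ax fx] := fsurj (k %% a) (ltn_pmod k a_gt0).
  have kb : k %/ a < b by rewrite ltn_divLR // mulnC.
  have [y By gy] := gsurj (k %/ a) kb.
  by exists (x, y) => //=; rewrite fx gy addnC mulnC -divn_eq.
Qed.

Record is_group_hom {T U : Type} (H : set (T -> T)) (p : (T -> T) -> U -> U) :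
    Prop := GroupHom {
  group_id : H id;
  group_rmul : forall f g, H f -> H g -> H (rmul f g);
  group_inv : forall f, H f -> exists g, [/\ H g, cancel f g & cancel g f];
  hom_id : p id = id;
  hom_rmul : forall f g, H f -> H g -> p (rmul f g) = rmul (p f) (p g) }.
Arguments group_id {T U H p}.
Arguments group_rmul {T U H p}.
Arguments group_inv {T U H p}.
Arguments hom_id {T U H p}.
Arguments hom_rmul {T U H p}.

Definition kernel {T U : Type} (H : set (T -> T)) (p : (T -> T) -> U -> U) :
  set (T -> T) := [set f | H f /\ p f = id].

(* [{classic _}] supplies the choice structure that [xget] needs on a function type. *)
Definition coset_image {T U : Type} (p : (T -> T) -> U -> U) (C : set (T -> T)) :
  U -> U := p (@xget {classic (T -> T)} id C).

Section GroupHomomorphism.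
Context {T U : Type} {H : set (T -> T)} {p : (T -> T) -> U -> U}.
Hypothesis Hp : is_group_hom H p.
Let H_id := group_id Hp.
Let H_rmul := group_rmul Hp.
Let H_inv := group_inv Hp.
Let p_id := hom_id Hp.
Let p_rmul := hom_rmul Hp.

Lemma p_rmul_cancel f g : H f -> H g -> cancel f g -> rmul (p f) (p g) = id.
Proof. by move=> Hf Hg /rmul_idP fK; rewrite -p_rmul // fK. Qed.

Lemma kernel_normal phi psi k : H phi -> H psi -> rmul phi psi = id ->
  kernel H p k -> kernel H p (rmul (rmul psi k) phi).
Proof.
move=> Hphi Hpsi /rmul_idP phiK [Hk pk].
have [g [_ _ gK]] := H_inv _ Hphi.
have psiK : cancel psi phi by move=> x; rewrite -{1}(gK x) phiK gK.
split; first by apply: H_rmul => //; apply: H_rmul.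
(* [!p_rmul] would loop, since any [f] unifies with [rmul id f]. *)
rewrite p_rmul ?(p_rmul psi k) ?pk //; last exact: H_rmul.
exact: p_rmul_cancel.
Qed.

Lemma lcoset_kernel phi : H phi ->
  lcoset (kernel H p) phi = [set chi | H chi /\ p chi = p phi].
Proof.
move=> Hphi; apply/seteqP; split=> [_ [k [Hk pk] <-] | chi [Hchi pchi]].
  by split; [apply: H_rmul | rewrite p_rmul // pk].
have [g [Hg phiK gK]] := H_inv _ Hphi.
exists (rmul g chi); last by apply: funext => x; rewrite /rmul /= phiK.
split; first exact: H_rmul.
by rewrite p_rmul // pchi; apply: p_rmul_cancel.
Qed.

Lemma coset_imageE phi : H phi -> coset_image p (lcoset (kernel H p) phi) = p phi.
Proof.
move=> Hphi; have phi_coset : lcoset (kernel H p) phi phi by exists id.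
have := @xgetI {classic (T -> T)} id _ _ phi_coset.
by rewrite lcoset_kernel // => -[].
Qed.

Lemma coset_image_bij :
  set_bij [set lcoset (kernel H p) phi | phi in H] (p @` H) (coset_image p).
Proof.
split.
- by move=> _ [phi Hphi <-]; rewrite coset_imageE //; exists phi.
- move=> C D; rewrite !in_setE => -[phi Hphi <-{C}] [psi Hpsi <-{D}].
  by rewrite !coset_imageE // => e; rewrite !lcoset_kernel // e.
- move=> _ [phi Hphi <-]; exists (lcoset (kernel H p) phi); first by exists phi.
  by rewrite coset_imageE.
Qed.

Lemma card_kernel_image : kernel H p `*` (p @` H) #= H.
Proof.
pose s tau := @xget {classic (T -> T)} id [set f | H f /\ p f = tau].
have sP tau : (p @` H) tau -> H (s tau) /\ p (s tau) = tau.
  move=> [phi Hphi <-].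
  exact: (@xgetI {classic (T -> T)} id [set f | H f /\ p f = p phi] phi).
suff hbij : set_bij (kernel H p `*` (p @` H)) H (fun q => rmul (s q.2) q.1).
  exact: pcard_eq hbij.
split.
- by move=> [k tau] [[Hk _] /sP[Hs _]]; apply: H_rmul.
- move=> [k tau] [k' tau']; rewrite !in_setE.
  move=> [[Hk pk] /sP[Hs ps]] [[Hk' pk'] /sP[Hs' ps']] /= e.
  have etau : tau = tau'.
    by have := congr1 p e; rewrite (p_rmul (s tau)) ?(p_rmul (s tau')) // pk pk' ps ps'.
  subst tau'; have [g [_ _ gK]] := H_inv _ Hs.
  congr (_, _); apply: funext => x; rewrite -(gK x).
  exact: (congr1 (fun f => f (g x)) e).
- move=> phi Hphi; have /sP[Hs ps] : (p @` H) (p phi) by exists phi.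
  have [g [Hg sK gK]] := H_inv _ Hs.
  exists (rmul g phi, p phi); last by apply: funext => x; rewrite /rmul /= sK.
  split; last by exists phi.
  split; first exact: H_rmul.
  by rewrite p_rmul // -ps; apply: p_rmul_cancel.
Qed.

End GroupHomomorphism.

Section Gamma.
Context {n m : nat} (X : premaniplex n) (V : voltage_operator n m).
Local Notation Y := (vY V).
Local Notation G := (Gamma X V).
Local Notation Gt := (Gammat X V).

Lemma Gamma_id : G id.
Proof. by split; [apply: is_aut_id | exists id; split; [apply: is_aut_id |]]. Qed.

Lemma Gamma_rmul tau sigma : G tau -> G sigma -> G (rmul tau sigma).
Proof.
move=> [tau_aut [phi [phi_aut phitau]]] [sigma_aut [psi [psi_aut psisigma]]].
split; first exact: is_aut_rmul.
by exists (rmul phi psi); split; [apply: is_aut_rmul | apply: lift_of_rmul].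
Qed.

Lemma Gamma_inv tau : G tau ->
  exists sigma, [/\ G sigma, cancel tau sigma & cancel sigma tau].
Proof.
move=> [tau_aut [phi [phi_aut phitau]]].
have [sigma [sigma_aut tauK sigmaK]] := is_aut_inv _ _ tau_aut.
have [psi [psi_aut _ psiK]] := is_aut_inv _ _ phi_aut.
exists sigma; split=> //; split=> //.
by exists psi; split=> //; apply: lift_of_inv phitau psiK tauK.
Qed.

Lemma Gammat_id : Gt id.
Proof. by split; [apply: is_aut_id | exists id; split; [apply: Gamma_id |]]. Qed.

Lemma Gammat_rmul phi psi : Gt phi -> Gt psi -> Gt (rmul phi psi).
Proof.
move=> [phi_aut [tau [Gtau phitau]]] [psi_aut [sigma [Gsigma psisigma]]].
split; first exact: is_aut_rmul.
by exists (rmul tau sigma); split; [apply: Gamma_rmul | apply: lift_of_rmul].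
Qed.

Lemma Gammat_inv phi : Gt phi ->
  exists psi, [/\ Gt psi, cancel phi psi & cancel psi phi].
Proof.
move=> [phi_aut [tau [Gtau phitau]]].
have [sigma [Gsigma tauK _]] := Gamma_inv _ Gtau.
have [psi [psi_aut phiK psiK]] := is_aut_inv _ _ phi_aut.
exists psi; split=> //; split=> //.
by exists sigma; split=> //; apply: lift_of_inv phitau psiK tauK.
Qed.

Lemma Gamma_subgroup : is_subgroup (Aut_adj (adj Y)) G.
Proof.
apply: is_subgroup_intro; first by move=> tau [].
- exact: Gamma_id.
- exact: Gamma_rmul.
- exact: Gamma_inv.
Qed.

Lemma Gammat_subgroup : is_subgroup (Aut_adj (mix_adj X V)) Gt.
Proof.
apply: is_subgroup_intro; first by move=> phi [].
- exact: Gammat_id.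
- exact: Gammat_rmul.
- exact: Gammat_inv.
Qed.

Lemma iota_Gammat a : is_aut (adj X) a -> Gt (iota_aut X V a).
Proof.
by move=> a_aut; split; [apply: iota_is_aut | exists id; split; [apply: Gamma_id |]].
Qed.

Lemma iota_inj (y0 : Y) : injective (iota_aut X V).
Proof.
by move=> a b ab; apply: funext => x; apply: (congr1 (fun h => (h (x, y0)).1) ab).
Qed.

Variable x0 : X.

Definition base_map (phi : X * Y -> X * Y) : Y -> Y := fun y => (phi (x0, y)).2.

Lemma base_mapE {phi tau} : lift_of phi tau -> base_map phi = tau.
Proof. by move=> phitau; apply: funext => y; apply: phitau. Qed.

Lemma lift_of_base_map {phi} : Gt phi -> lift_of phi (base_map phi).
Proof. by move=> [_ [tau [_ phitau]]]; rewrite (base_mapE phitau). Qed.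

Lemma base_map_rmul phi psi : Gt phi -> Gt psi ->
  base_map (rmul phi psi) = rmul (base_map phi) (base_map psi).
Proof. by move=> _ /lift_of_base_map psi_lift; apply: funext => y; apply: psi_lift. Qed.

Lemma base_map_group_hom : is_group_hom Gt base_map.
Proof.
split=> //; [exact: Gammat_id | exact: Gammat_rmul | exact: Gammat_inv |].
exact: base_map_rmul.
Qed.

Lemma image_base_map : base_map @` Gt = G.
Proof.
apply/seteqP; split=> [_ [phi [_ [tau [Gtau phitau]]] <-] | tau Gtau].
  by rewrite (base_mapE phitau).
have [_ [phi [phi_aut phitau]]] := Gtau.
by exists phi; [split=> //; exists tau | apply: base_mapE].
Qed.

Lemma kernel_base_map (Vconv : tree_convention V) (Vpres : preserves_connectivity V)
    (y0 : Y) :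
  kernel Gt base_map = iota_aut X V @` Aut_adj (adj X).
Proof.
apply/seteqP; split=> [phi [Gphi phi_id] | _ [a a_aut <-]].
  have phi_lift := lift_of_base_map Gphi; rewrite phi_id in phi_lift.
  by have [a a_aut ->] := lift_id_iota Vconv Vpres y0 Gphi.1 phi_lift; exists a.
by split; [apply: iota_Gammat | apply: base_mapE].
Qed.

End Gamma.

Theorem proposition6p7 (n m : nat) (X : premaniplex n) (V : voltage_operator n m)
  (Vconv : tree_convention V)
  (Xconn : connected X) (Vpres : preserves_connectivity V) :
  let AutX := Aut_adj (adj X) in
  let AutY := Aut_adj (adj (vY V)) in
  let AutM := Aut_adj (mix_adj X V) in
  let G := Gamma X V in
  let Gt := Gammat X V in
  let K := iota_aut X V @` AutX in
  [/\ is_subgroup AutY G /\ is_subgroup AutM Gt,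
      (* iota : Aut(X) -> tilde Gamma is an injective homomorphism *)
      [/\ forall a, AutX a -> Gt (iota_aut X V a),
          (forall a b, AutX a -> AutX b -> iota_aut X V (rmul a b) = rmul (iota_aut X V a) (iota_aut X V b)) &
          (forall a b, AutX a -> AutX b -> iota_aut X V a = iota_aut X V b -> a = b)],
      (* pi : tilde Gamma -> Gamma sends a lift of tau to tau, is a surjective
         homomorphism, and its kernel is iota(Aut(X)) *)
      (exists pi : (X * vY V -> X * vY V) -> (vY V -> vY V),
        [/\ forall phi, Gt phi -> lift_of phi (pi phi),
            forall phi, Gt phi -> G (pi phi),
            (forall phi psi, Gt phi -> Gt psi -> pi (rmul phi psi) = rmul (pi phi) (pi psi)),
            (forall tau, G tau -> exists phi, Gt phi /\ pi phi = tau) &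
            K = [set phi | Gt phi /\ pi phi = id]]) /\
      (* iota(Aut(X)) is normal in tilde Gamma *)
      (forall phi psi k, Gt phi -> Gt psi -> rmul phi psi = id -> K k ->
          K (rmul (rmul psi k) phi)),
      (* tilde Gamma / iota(Aut(X)) is isomorphic to Gamma *)
      (exists f : set (X * vY V -> X * vY V) -> (vY V -> vY V),
        set_bij [set lcoset K phi | phi in Gt] G f /\
        forall phi psi, Gt phi -> Gt psi ->
          f (lcoset K (rmul phi psi)) = rmul (f (lcoset K phi)) (f (lcoset K psi))) &
      (* finite case: |tilde Gamma| = |Aut(X)| |Gamma| *)
      (finite_set [set: flag X] -> finite_set [set: flag (vY V)] ->
        forall a b : nat, AutX #= `I_a -> G #= `I_b -> Gt #= `I_(a * b))].
Proof.
move=> AutX AutY AutM G Gt K.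
have [[[x0 y0]] _] := Vpres X Xconn.
pose pi := base_map X V x0.
have pi_hom : is_group_hom Gt pi := base_map_group_hom X V x0.
have K_kernel : K = kernel Gt pi := esym (kernel_base_map X V x0 Vconv Vpres y0).
have G_image : G = pi @` Gt := esym (image_base_map X V x0).
split.
- exact: conj (Gamma_subgroup X V) (Gammat_subgroup X V).
- by split=> [a|//|a b _ _]; [apply: iota_Gammat | apply: (iota_inj X V y0)].
- split; last by rewrite K_kernel; apply: kernel_normal.
  exists pi; split.
  + exact: lift_of_base_map.
  + by move=> phi Gphi; rewrite G_image; exists phi.
  + exact: hom_rmul pi_hom.
  + by rewrite G_image => _ [phi Gphi <-]; exists phi.
  + exact: K_kernel.
- exists (coset_image pi); rewrite K_kernel G_image; split; first exact: coset_image_bij.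
  move=> phi psi Gphi Gpsi; rewrite !(coset_imageE pi_hom) //.
    exact: (hom_rmul pi_hom _ _ Gphi Gpsi).
  exact: (group_rmul pi_hom _ _ Gphi Gpsi).
- move=> _ _ a b AutX_a G_b.
  have K_a : kernel Gt pi #= `I_a.
    rewrite -K_kernel; apply: card_eq_trans AutX_a.
    by apply: inj_card_eq => f g _ _; apply: (iota_inj X V y0).
  have KG_Gt := card_kernel_image pi_hom; rewrite -G_image in KG_Gt.
  exact: card_eq_trans (card_esym KG_Gt) (card_setX_II K_a G_b).
Qed.
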